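(* (i) If $\omega$ is a standard Gaussian random variable, then $\mathbb P(|\omega|\ge x)\le \frac{2\exp(-x^2/2)}{\sqrt{2\pi}\,x}$ for all $x>0$. (ii) Let $0\le k<j$ be integers and let $\xi=(\xi_0,\dots,\xi_{2^j-1})$ be a vector of independent standard normal random variables. Let $\xi^*=(\xi^*_1,\dots,\xi^*_{2^j})$ be the non-increasing rearrangement of $(|\xi_0|,\dots,|\xi_{2^j-1}|)$. Then for every $K\ge1$, $$\mathbb P\big(\xi^*_{2^k}\ge K\sqrt{j-k}\big)\le\big(2e^{-K^2/2}\big)^{(j-k)2^k}\cdot e^{2^k}.$$ *)

From HB Require Import structures.
From mathcomp Require Import all_boot all_order all_algebra.
From mathcomp Require Import all_classical all_reals all_analysis.
Set Implicit Arguments. Unset Strict Implicit. Unset Printing Implicit Defensive.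
Import Order.TTheory GRing.Theory Num.Theory.
Local Open Scope classical_set_scope.
Local Open Scope ring_scope.

Definition std_gaussian d (T : measurableType d) (R : realType)
  (P : probability T R) (X : {RV P >-> R}) : Prop :=
  forall A : set R, measurable A -> distribution P X A = normal_prob 0 1 A.

(* Mutual independence of a finite family of real random variables:
   for every choice of Borel sets B_i, the joint probability factorizes.
   (Taking B_i = setT for unused indices gives the product rule on every
   subfamily.) *)
Definition mutually_independent d (T : measurableType d) (R : realType)
  (P : probability T R) (n : nat) (X : 'I_n -> {RV P >-> R}) : Prop :=
  forall B : 'I_n -> set R, (forall i, measurable (B i)) ->
    P (\bigcap_(i in [set: 'I_n]) (X i @^-1` B i))
    = (\prod_(i < n) P (X i @^-1` B i))%E.

(* Non-increasing rearrangement of (|v_0|, ..., |v_{n-1}|), indexed from 1: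
   nonincr_abs_rearr v m is the m-th largest of the |v_i| (1 <= m <= n). *)
Definition nonincr_abs_rearr (R : realType) (n : nat) (v : 'I_n -> R) (m : nat) : R :=
  nth 0 (sort (fun x y : R => y <= x) [seq `|v i| | i <- enum 'I_n]) m.-1.

From HB Require Import structures.
From mathcomp Require Import all_boot all_order all_algebra.
From mathcomp Require Import all_classical all_reals all_analysis.
From mathcomp Require Import measurable_realfun ring lra.
Import Order.TTheory GRing.Theory Num.Theory.
Import numFieldNormedType.Exports.
Local Open Scope classical_set_scope.
Local Open Scope ring_scope.

(* (i) Since (y / x) phi(y) >= phi(y) on [x, +oo) and y phi(y) = - phi'(y), the
   upper tail of the standard normal density phi is at most phi(x) / x; the
   lower tail is its mirror image.
   (ii) If the 2^k-th largest |xi_i| is at least a := K sqrt(j - k), then for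
   some set S of m := 2^k indices all |xi_i|, i in S, are at least a.  By
   independence and (i) a fixed S does so with probability at most
   exp(-a^2/2)^m = exp(-K^2/2)^((j-k)m), and there are
   C(2^j, m) <= (e 2^j / m)^m = 2^((j-k)m) e^m such sets. *)

Lemma set_abs_geE {R : realDomainType} (x : R) :
  [set y : R | x <= `|y|] = `]-oo, (- x)] `|` `[x, +oo[.
Proof.
apply/seteqP; split => y /=.
- by rewrite ler_normr => /orP[xy|xy]; [right|left];
    rewrite /= in_itv /= ?andbT // lerNr.
- by case => /=; rewrite in_itv/= ?andbT => h; rewrite ler_normr;
    apply/orP; [right|left]; lra.
Qed.

Lemma measurable_set_abs_ge {R : realType} (x : R) :
  measurable [set y : R | x <= `|y|].
Proof. by rewrite set_abs_geE; apply: measurableU. Qed.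

Section standard_normal_tail.
Context {R : realType}.
Local Notation mu := (@lebesgue_measure R).
Local Notation phi := (normal_pdf (0 : R) 1).

Let phi_cont : continuous phi := continuous_normal_pdf (oner_neq0 R).

Lemma normal_pdf01E :
  phi = fun y => (Num.sqrt (2 * pi))^-1 * expR (- (y ^+ 2) / 2).
Proof.
apply/funext => y; rewrite /normal_pdf oner_eq0 /normal_fun /normal_peak.
by rewrite subr0 !expr1n mul1r mulNr mulr_natl.
Qed.

Lemma normal_pdf01N (y : R) : phi (- y) = phi y.
Proof. by rewrite normal_pdf01E sqrrN. Qed.

Lemma is_derive_normal_pdf01 (y : R) : is_derive y 1 phi (- y * phi y).
Proof.
rewrite normal_pdf01E.
have dsq : is_derive y 1 (fun y : R => - (y ^+ 2) / 2) (- y).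
  apply: is_derive_eq; rewrite !scaler0 add0r.
  by change (2^-1 * - (y * 1 + y * 1) = - y); lra.
have dexp : is_derive y 1 (expR \o (fun y : R => - (y ^+ 2) / 2))
                          (expR (- (y ^+ 2) / 2) * - y).
  exact: is_derive1_comp.
by apply: is_derive_eq; rewrite [RHS]mulrC -mulrA.
Qed.

Lemma cvgy_normal_pdf01 : phi y @[y --> +oo] --> 0.
Proof.
rewrite normal_pdf01E -(mulr0 (Num.sqrt (2 * pi))^-1).
apply: cvgM; first exact: cvg_cst.
have -> : (fun y : R => expR (- (y ^+ 2) / 2))
          = (fun z => expR (- z)) \o (fun y : R => y ^+ 2 / 2).
  by apply/funext => y /=; rewrite mulNr.
apply: (@cvg_comp _ _ _ _ _ _ (pinfty_nbhs R)); last exact: cvgr_expR.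
apply/cvgryPge => A.
near=> y.
have y1 : 1 <= y by near: y; exact: nbhs_pinfty_ge (num_real _).
have yA : 2 * A <= y by near: y; exact: nbhs_pinfty_ge (num_real _).
nra.
Unshelve. all: by end_near. Qed.

Lemma integral_mul_normal_pdf01 (x : R) : 0 <= x ->
  (\int[mu]_(y in `[x, +oo[) (y * phi y)%:E = (phi x)%:E)%E.
Proof.
move=> x0.
have dNphi (y : R) : is_derive y 1 (fun y => - phi y) (y * phi y).
  by rewrite -[y * _]opprK -mulNr; exact: is_deriveN (is_derive_normal_pdf01 y).
rewrite (@ge0_continuous_FTC2y _ _ (fun y => - phi y) _ 0).
- by rewrite sub0e EFinN oppeK.
- by move=> y xy; rewrite mulr_ge0 ?normal_pdf_ge0 // (le_trans x0).
- apply: continuous_subspaceT => y.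
  by apply: (@continuousM _ R^o id); [exact: cvg_id | exact: phi_cont].
- by rewrite -[X in _ --> X]oppr0; apply: cvgN; exact: cvgy_normal_pdf01.
- by move=> y _; apply: ex_derive; exact: dNphi.
- by apply: cvg_at_right_filter; apply: cvgN; exact: phi_cont.
- by move=> y _; rewrite derive1E (@derive_val _ _ _ _ _ _ _ (dNphi y)).
Qed.

Lemma integral_normal_pdf01_itvy_le (x : R) : 0 < x ->
  (\int[mu]_(y in `[x, +oo[) (phi y)%:E <= (phi x / x)%:E)%E.
Proof.
move=> x0.
have mphi : measurable_fun setT phi := measurable_normal_pdf 0 1.
rewrite mulrC EFinM -(integral_mul_normal_pdf01 _ (ltW x0)).
rewrite -ge0_integralZl_EFin ?invr_ge0 ?(ltW x0) //; last 2 first.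
- move=> y /=; rewrite in_itv /= andbT => xy.
  by rewrite lee_fin mulr_ge0 ?normal_pdf_ge0 // (le_trans (ltW x0)).
- apply/measurable_EFinP; apply: measurable_funTS.
  exact: measurable_funM.
apply: ge0_le_integral => //.
- by move=> y _; rewrite lee_fin normal_pdf_ge0.
- by apply/measurable_EFinP; exact: measurable_funTS.
- apply/measurable_EFinP; apply: measurable_funTS.
  exact: measurable_funM (measurable_funM _ _).
- move=> y /=; rewrite in_itv /= andbT => xy.
  rewrite -EFinM lee_fin mulrA -[leLHS]mul1r ler_wpM2r ?normal_pdf_ge0 //.
  by rewrite ler_pdivlMl // mulr1.
Qed.

Lemma normal_prob01_abs_ge (x : R) : 0 < x ->
  (normal_prob 0 1 [set y : R | (x <= `|y|)%R]
   <= (2 * expR (- (x ^+ 2) / 2) / (Num.sqrt (2 * pi) * x))%:E)%E.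
Proof.
move=> x0.
have mphi : measurable_fun setT (EFin \o phi).
  by apply/measurable_EFinP; exact: measurable_normal_pdf.
rewrite /normal_prob set_abs_geE ge0_integral_setU //=; last 3 first.
- exact: measurable_funTS.
- by move=> y _; rewrite lee_fin normal_pdf_ge0.
- by apply/disj_setPS => y [] /=; rewrite !in_itv /= ?andbT; lra.
rewrite ge0_integration_by_substitutionNy; last 2 first.
- exact: continuous_subspaceT phi_cont.
- by move=> y _; exact: normal_pdf_ge0.
under eq_integral do rewrite /= normal_pdf01N.
have -> : 2 * expR (- (x ^+ 2) / 2) / (Num.sqrt (2 * pi) * x)
          = phi x / x + phi x / x.
  rewrite normal_pdf01E; field.
  by rewrite !gt_eqF // sqrtr_gt0 mulr_gt0 // pi_gt0.
by rewrite EFinD; apply: leeD; exact: integral_normal_pdf01_itvy_le.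
Qed.

Lemma normal_prob01_abs_ge_expR (x : R) : 1 <= x ->
  (normal_prob 0 1 [set y : R | (x <= `|y|)%R] <= (expR (- (x ^+ 2) / 2))%:E)%E.
Proof.
move=> x1; have x0 : 0 < x by lra.
apply: le_trans (normal_prob01_abs_ge _ x0) _; rewrite lee_fin.
have sqrt2pi : 2 <= Num.sqrt (2 * pi : R).
  rewrite -[leLHS]ger0_norm // -sqrtr_sqr ler_sqrt ?mulr_ge0 ?pi_ge0 //.
  by have := @pi_ge2 R; lra.
rewrite ler_pdivrMr ?mulr_gt0 ?(lt_le_trans _ sqrt2pi) //.
by rewrite mulrC ler_wpM2l ?expR_ge0 //; nra.
Qed.

End standard_normal_tail.

Lemma std_gaussian_abs_ge d (T : measurableType d) (R : realType)
    (P : probability T R) (w : {RV P >-> R}) (x : R) :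
  std_gaussian w ->
  P [set t | x <= `|w t|] = normal_prob 0 1 [set y : R | x <= `|y|].
Proof. by move=> gw; exact: gw _ (measurable_set_abs_ge x). Qed.

Lemma sorted_ge_nth_count {disp : Order.disp_t} {T : orderType disp}
    (x0 a : T) (s : seq T) (m : nat) :
  sorted (fun x y : T => (y <= x)%O) s -> (m < size s)%N ->
  (a <= nth x0 s m)%O = (m < count (fun y => a <= y)%O s)%N.
Proof.
move=> s_sorted lt_ms.
have nth_anti i j :
    (i <= j)%N -> (j < size s)%N -> (nth x0 s j <= nth x0 s i)%O.
  move=> le_ij lt_js; apply: (sorted_leq_nth (rev_trans le_trans) lexx) => //.
  by rewrite inE (leq_ltn_trans le_ij).
apply/idP/idP => [a_le | ].
- have all_take : all (fun y => a <= y)%O (take m.+1 s).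
    apply/(all_nthP x0) => i; rewrite size_takel // => lt_im.
    by rewrite nth_take // (le_trans a_le) // nth_anti.
  rewrite -(cat_take_drop m.+1 s) count_cat.
  move: all_take; rewrite all_count => /eqP ->.
  by rewrite size_takel // leq_addr.
- apply: contraLR; rewrite -ltNge -leqNgt => nth_lt.
  have drop0 : count (fun y => a <= y)%O (drop m s) = 0%N.
    apply/eqP; rewrite -leqn0 leqNgt -has_count.
    apply/hasPn => y /(nthP x0)[i]; rewrite size_drop => lt_i <-.
    rewrite nth_drop -ltNge (le_lt_trans _ nth_lt) //.
    by rewrite nth_anti ?leq_addr // -ltn_subRL.
  rewrite -(cat_take_drop m s) count_cat drop0 addn0.
  by rewrite (leq_trans (count_size _ _)) // size_takel // ltnW.
Qed.

Lemma count_enum_card {T : finType} (P : pred T) :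
  count P (enum T) = #|[pred x | P x]|.
Proof. by rewrite enumT cardE /enum_mem size_filter; apply: eq_count. Qed.

Lemma leq_card_subsetP {T : finType} (A : {pred T}) (m : nat) :
  reflect (exists S : {set T}, #|S| = m /\ {subset S <= A}) (m <= #|A|)%N.
Proof.
apply: (iffP idP) => [/card_geqP[s [s_uniq <- sA]] | [S [<- SA]]].
- exists [set x in s]; split; first by rewrite cardsE (card_uniqP s_uniq).
  by move=> x; rewrite inE => /sA.
- by apply: subset_leq_card; apply/fintype.subsetP.
Qed.

Lemma nonincr_abs_rearr_geP {R : realType} {n : nat} (v : 'I_n -> R) (a : R)
    (m : nat) :
  (0 < m <= n)%N ->
  a <= nonincr_abs_rearr v m <->
  exists S : {set 'I_n}, #|S| = m /\ forall i, i \in S -> a <= `|v i|.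
Proof.
case/andP => m_gt0 le_mn.
rewrite /nonincr_abs_rearr sorted_ge_nth_count; last 2 first.
- by apply: sort_sorted => x y; exact: le_total.
- by rewrite size_sort size_map size_enum_ord prednK.
rewrite prednK // (permP (permEl (perm_sort _ _))) count_map count_enum_card.
split => [/leq_card_subsetP[S [cS sub]] | [S [cS sub]]].
- by exists S; split => // i /sub.
- by apply/leq_card_subsetP; exists S; split => // i /sub.
Qed.

Section independent_family.
Context {d} {T : measurableType d} {R : realType} {P : probability T R}
  {n : nat} {X : 'I_n -> {RV P >-> R}}.
Hypothesis indep : mutually_independent X.
Context {A : set R} {q : R}.
Hypotheses (mA : measurable A)
  (PXA_le : forall i, (P (X i @^-1` A) <= q%:E)%E).

Let all_in (S : {set 'I_n}) : set T :=
  [set t | forall i, i \in S -> A (X i t)].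

Let all_inE S :
  all_in S = \bigcap_(i in [set: 'I_n]) X i @^-1` (if i \in S then A else setT).
Proof.
apply/seteqP; split => t /= h i.
- by move=> _; case: ifP => // /h.
- by move=> iS; have := h i I; rewrite iS.
Qed.

Let measurable_all_in S : measurable (all_in S).
Proof.
rewrite all_inE; apply: fin_bigcap_measurable; first exact: finite_finset.
by move=> i _; apply: measurable_funPTI; case: ifP.
Qed.

Lemma prob_all_in_le S : (P (all_in S) <= (q ^+ #|S|)%:E)%E.
Proof.
rewrite all_inE indep; last by move=> i; case: ifP.
have -> : q ^+ #|S| = \prod_(i < n) (if i \in S then q else 1).
  by rewrite -big_mkcond prodr_const.
rewrite -prodEFin.
apply: (proj2 (big_ind2 (fun x y => 0 <= x /\ x <= y)%E _ _ _)) => //.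
- move=> x1 x2 y1 y2 [x1_ge0 le1] [y1_ge0 le2].
  by split; [exact: mule_ge0 | exact: lee_pmul].
- move=> i _; split; first exact: measure_ge0.
  by case: ifP => _; [exact: PXA_le | rewrite preimage_setT probability_setT].
Qed.

Lemma prob_exists_card_all_in_le (m : nat) :
  (P [set t | exists S : {set 'I_n}, #|S| = m /\ forall i, i \in S -> A (X i t)]
   <= ('C(n, m)%:R * q ^+ m)%:E)%E.
Proof.
set L := enum [set S : {set 'I_n} | #|S| == m]%SET.
have -> : [set t | exists S : {set 'I_n},
                     #|S| = m /\ forall i, i \in S -> A (X i t)]
          = \bigcup_(S in [set` L]) all_in S.
  apply/seteqP; split => t /=.
  - by move=> [S [cS h]]; exists S => //=; rewrite /L mem_enum inE cS.
  - by move=> [S /=]; rewrite /L mem_enum inE => /eqP cS h; exists S.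
have finL : finite_set [set` L] := finite_seq L.
have mL S : [set` L] S -> measurable (all_in S).
  by move=> _; exact: measurable_all_in.
have := content_sub_fsum P finL mL (fin_bigcup_measurable finL mL).
move=> /(_ (@subset_refl _ _)) /le_trans; apply.
rewrite -fsbig_seq ?enum_uniq // big_enum /=.
apply: le_trans (lee_sum (g := fun=> (q ^+ m)%:E) _ _) _.
  by move=> S; rewrite inE => /eqP <-; exact: prob_all_in_le.
by rewrite sumEFin sumr_const card_draws card_ord mulr_natl.
Qed.

End independent_family.

Lemma ffact_leq_expn (n m : nat) : (n ^_ m <= n ^ m)%N.
Proof.
have -> : (n ^ m = \prod_(i < m) n)%N by rewrite prod_nat_const card_ord.
by rewrite ffact_prod; apply: leq_prod => i _; exact: leq_subr.
Qed.

Lemma expn_self_le_expR_fact {R : realType} (m : nat) :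
  m%:R ^+ m <= expR m%:R * m`!%:R :> R.
Proof.
case: m => [|m]; first by rewrite expr0 expR0 mul1r fact0.
have := @expR_ge1Dxn R m.+1%:R m (ler0n _ _).
by rewrite -ler_pdivrMr ?ltr0n ?fact_gt0 //; apply: le_trans; lra.
Qed.

Lemma bin_mul_expn_le_expR {R : realType} (n m : nat) :
  ('C(n, m) * m ^ m)%:R <= (n ^ m)%:R * expR m%:R :> R.
Proof.
have bin_fact : ('C(n, m) * m`!)%:R <= (n ^ m)%:R :> R.
  by rewrite ler_nat bin_ffact ffact_leq_expn.
rewrite natrM natrX.
apply: le_trans (ler_wpM2l (ler0n _ _) (expn_self_le_expR_fact m)) _.
by rewrite mulrCA -natrM mulrC ler_wpM2r ?expR_ge0.
Qed.

Lemma bin_expn2_le {R : realType} (j k : nat) : (k <= j)%N ->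
  'C(2 ^ j, 2 ^ k)%:R <= 2 ^+ ((j - k) * 2 ^ k) * expR (2 ^ k)%:R :> R.
Proof.
move=> le_kj; set m := (2 ^ k)%N.
have mm_gt0 : 0 < (m ^ m)%:R :> R by rewrite ltr0n !expn_gt0.
rewrite -(ler_pM2r mm_gt0) -natrM (le_trans (bin_mul_expn_le_expR _ _)) //.
have -> : ((2 ^ j) ^ m = 2 ^ ((j - k) * m) * m ^ m)%N.
  by rewrite -!expnM -expnD -mulnDl subnK.
by rewrite natrM natrX mulrAC.
Qed.

Theorem lemma4p3 :
  (* (i) Gaussian tail bound *)
  (forall (d : measure_display) (T : measurableType d) (R : realType)
     (P : probability T R) (w : {RV P >-> R}),
     std_gaussian w ->
     forall x : R, 0 < x ->
       (P [set t | (x <= `|w t|)%R]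
        <= (2 * expR (- (x ^+ 2) / 2) / (Num.sqrt (2 * pi) * x))%:E)%E)
  /\
  (* (ii) tail bound for the 2^k-th largest of 2^j i.i.d. |N(0,1)| *)
  (forall (d : measure_display) (T : measurableType d) (R : realType)
     (P : probability T R) (j k : nat), (k < j)%N ->
     forall xi : 'I_(2 ^ j) -> {RV P >-> R},
       mutually_independent xi ->
       (forall i, std_gaussian (xi i)) ->
       forall K : R, 1 <= K ->
         (P [set t | (K * Num.sqrt ((j - k)%:R)
                      <= nonincr_abs_rearr (fun i => xi i t) (2 ^ k))%R]
          <= ((2 * expR (- (K ^+ 2) / 2)) ^+ ((j - k) * 2 ^ k)
              * expR ((2 ^ k)%:R))%:E)%E).
Proof.
split.
- move=> d T R P w gw x x0.
  by rewrite std_gaussian_abs_ge //; exact: normal_prob01_abs_ge.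
- move=> d T R P j k lt_kj xi indep gauss K K_ge1.
  set m := (2 ^ k)%N; set a := K * Num.sqrt (j - k)%:R.
  have sqrt_ge1 : 1 <= Num.sqrt (j - k)%:R :> R.
    by rewrite -[X in X <= _]sqrtr1 ler_sqrt // ler1n subn_gt0.
  have a_ge1 : 1 <= a by rewrite /a; nra.
  have tail i :
      (P (xi i @^-1` [set y | (a <= `|y|)%R]) <= (expR (- (a ^+ 2) / 2))%:E)%E.
    by rewrite std_gaussian_abs_ge //; exact: normal_prob01_abs_ge_expR.
  have m_range : (0 < m <= 2 ^ j)%N.
    by rewrite expn_gt0 leq_exp2l // (ltnW lt_kj).
  have -> : [set t | a <= nonincr_abs_rearr (fun i => xi i t) m]
      = [set t | exists S : {set _},
                 #|S| = m /\ forall i, i \in S -> a <= `|xi i t|].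
    by apply/seteqP; split => t /(nonincr_abs_rearr_geP _ _ _ m_range).
  have := prob_exists_card_all_in_le indep (measurable_set_abs_ge a) tail m.
  move=> /le_trans; apply.
  have tail_pow :
      expR (- (a ^+ 2) / 2) ^+ m = expR (- (K ^+ 2) / 2) ^+ ((j - k) * m).
    have -> : - (a ^+ 2) / 2 = (j - k)%:R * (- (K ^+ 2) / 2).
      by rewrite exprMn sqr_sqrtr ?ler0n //; ring.
    by rewrite expRM_natl -exprM.
  rewrite lee_fin tail_pow exprMn [X in _ <= X]mulrAC.
  by rewrite ler_wpM2r ?exprn_ge0 ?expR_ge0 // bin_expn2_le // ltnW.
Qed.
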